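(* Let $\Omega\subseteq\mathbb{R}^{m\times m}$, let $\mathcal{P}\subseteq\mathbb{R}^{m\times m}$, and let $s:\Omega^2\times\mathcal{P}\to\mathbb{R}$ be a $P$-score. Let $n\ge 2$ and define the $\mathcal{G}$-align distance function induced by $s$ as $d_{\mathcal{G}}:\Omega^n\to\mathbb{R}$, $$d_{\mathcal{G}}(A_1,\dots,A_n)=\min_{P\in S}\frac12\sum_{i,j\in[n]} s(A_i,A_j,P_{i,j}),$$ where $S$ is the set of families $\{P_{i,j}\}_{i,j\in[n]}$ with $P_{i,j}\in\mathcal{P}$ for all $i,j$, $P_{i,k}P_{k,j}=P_{i,j}$ for all $i,j,k\in[n]$, and $P_{i,i}=I$ for all $i\in[n]$. Then $d_{\mathcal{G}}$ is a pseudo $n$-metric.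
   Context: $[n]=\{1,\dots,n\}$. A map $s:\Omega^2\times\mathcal{P}\to\mathbb{R}$ is a $P$-score if $\mathcal{P}$ is closed under inversion (and, implicitly, contains $I$ and the products appearing below), and for all $P,P'\in\mathcal{P}$ and $A,B,C\in\Omega$: $s(A,B,P)\ge 0$; $s(A,A,I)=0$; $s(A,B,P)=s(B,A,P^{-1})$; $s(A,B,P)+s(B,C,P')\ge s(A,C,PP')$. Notation: $A_{1:n}=(A_1,\dots,A_n)$; for $A_{n+1}\in\Omega$, $A^i_{1:n,n+1}$ is $A_{1:n}$ with $A_i$ replaced by $A_{n+1}$; $A_{\sigma(1:n)}$ is the sequence with $i$-th entry $A_{\sigma(i)}$ for a permutation $\sigma$. A map $D:\Omega^n\to\mathbb{R}$ is a pseudo $n$-metric if for all $A_1,\dots,A_{n+1}\in\Omega$ and all permutations $\sigma$: $D(A_{1:n})\ge0$; $D(A_{1:n})=D(A_{\sigma(1:n)})$; $D(A_{1:n})\le\sum_{i=1}^n D(A^i_{1:n,n+1})$; and $D(A,\dots,A)=0$ for all $A\in\Omega$. *)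

From HB Require Import structures.
From mathcomp Require Import all_boot all_order all_algebra all_fingroup.
From mathcomp Require Import reals.
Set Implicit Arguments. Unset Strict Implicit. Unset Printing Implicit Defensive.
Import Order.TTheory GRing.Theory Num.Theory.
Local Open Scope ring_scope.

Section Defs.
Variables (R : realType) (m : nat).
Local Notation Mat := 'M[R]_m.

(* s : Omega^2 x Pset -> R is a P-score.  Pset is closed under inversion
   (so its elements are invertible) and, implicitly, contains I and the
   products P P' appearing in the triangle axiom. *)
Definition P_score (Omega Pset : pred Mat) (s : Mat -> Mat -> Mat -> R) : Prop :=
  (forall P, Pset P -> P \in unitmx /\ Pset (invmx P)) /\
  Pset 1%:M /\
  (forall P P', Pset P -> Pset P' -> Pset (P *m P')) /\
  (forall A B P, Omega A -> Omega B -> Pset P -> 0 <= s A B P) /\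
  (forall A, Omega A -> s A A 1%:M = 0) /\
  (forall A B P, Omega A -> Omega B -> Pset P -> s A B P = s B A (invmx P)) /\
  (forall A B C P P', Omega A -> Omega B -> Omega C -> Pset P -> Pset P' ->
     s A C (P *m P') <= s A B P + s B C P').

Definition replace_at (n : nat) (A : 'I_n -> Mat) (i : 'I_n) (B : Mat) : 'I_n -> Mat :=
  fun j => if j == i then B else A j.

Definition pseudo_n_metric (n : nat) (Omega : pred Mat) (D : ('I_n -> Mat) -> R) : Prop :=
  [/\ (forall A : 'I_n -> Mat, (forall i, Omega (A i)) -> 0 <= D A),
      (forall (A : 'I_n -> Mat) (sigma : 'S_n), (forall i, Omega (A i)) ->
         D A = D (fun i => A (sigma i))),
      (forall (A : 'I_n -> Mat) (B : Mat), (forall i, Omega (A i)) -> Omega B ->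
         D A <= \sum_(i < n) D (replace_at A i B)) &
      (forall B : Mat, Omega B -> D (fun _ => B) = 0)].

Definition admissible (n : nat) (Pset : pred Mat) (P : 'I_n -> 'I_n -> Mat) : Prop :=
  [/\ (forall i j, Pset (P i j)),
      (forall i j k, P i k *m P k j = P i j) &
      (forall i, P i i = 1%:M)].

Definition galign_cost (n : nat) (s : Mat -> Mat -> Mat -> R)
  (A : 'I_n -> Mat) (P : 'I_n -> 'I_n -> Mat) : R :=
  2^-1 * \sum_(i < n) \sum_(j < n) s (A i) (A j) (P i j).

Definition is_galign_distance (n : nat) (Omega Pset : pred Mat)
  (s : Mat -> Mat -> Mat -> R) (d : ('I_n -> Mat) -> R) : Prop :=
  forall A : 'I_n -> Mat, (forall i, Omega (A i)) ->
    (exists2 P, admissible Pset P & d A = galign_cost s A P) /\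
    (forall P, admissible Pset P -> d A <= galign_cost s A P).

End Defs.

From HB Require Import structures.
From mathcomp Require Import all_boot all_order all_algebra all_fingroup.
From mathcomp Require Import reals.

(* Nonnegativity, symmetry and vanishing on constant tuples are immediate; the
   content is the polygon inequality d(A) <= sum_i d(A^i), where A^i is A with
   A_i replaced by B.  Take an optimal family Q^i for each A^i and, for every j,
   an index i <> j minimising a_j := s(A_j, B, Q^i_{ji}).  Gluing g_j := Q^i_{ji}
   into the star family P_jk := g_j g_k^-1 through B, the triangle inequality
   bounds the cost of P by (n-1) sum_j a_j <= sum_j sum_{i<>j} s(A_j, B, Q^i_{ji}),
   and the terms with a fixed i occur twice (in row i and column i) in the cost
   of Q^i, i.e. they are bounded by d(A^i). *)

Set Implicit Arguments. Unset Strict Implicit. Unset Printing Implicit Defensive.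
Import Order.TTheory GRing.Theory Num.Theory.
Local Open Scope ring_scope.

Section FiniteSums.
Variables (R : realDomainType) (T : finType).

Lemma exists_mulrn_card_le_sum (P : pred T) (f : T -> R) :
  (0 < #|P|)%N -> exists2 x, P x & f x *+ #|P| <= \sum_(y in P) f y.
Proof.
case/card_gt0P => x0 Px0; case: (arg_minP f Px0) => x Px xmin.
by exists x => //; rewrite -sumr_const; apply: ler_sum => y /xmin.
Qed.

Lemma sum_row_col_le_sum (f : T -> T -> R) (i : T) :
  (forall j k, 0 <= f j k) ->
  \sum_(j | j != i) (f i j + f j i) <= \sum_j \sum_k f j k.
Proof.
move=> f_ge0; rewrite big_split /= [X in _ <= X](bigD1 i) //= lerD //.
  by rewrite [X in _ <= X](bigD1 i) //= lerDr.
by apply: ler_sum => j _; rewrite [X in _ <= X](bigD1 i) //= lerDl sumr_ge0.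
Qed.

Lemma sum_offdiag_addr (a : T -> R) :
  \sum_j \sum_(k | k != j) (a j + a k) = (\sum_j a j) *+ #|T|.-1 *+ 2.
Proof.
rewrite mulr2n; under eq_bigr do rewrite big_split /=.
rewrite big_split /= [X in _ + X](exchange_big_dep predT) //=.
have row j : \sum_(k | k != j) a j = a j *+ #|T|.-1 by rewrite sumr_const cardC1.
have col k : \sum_(j | predT j && (k != j)) a k = a k *+ #|T|.-1.
  by rewrite -(cardC1 k) -sumr_const; apply: eq_bigl => j; rewrite eq_sym.
by under eq_bigr do rewrite row; under [X in _ + X]eq_bigr do rewrite col; rewrite sumrMnl.
Qed.

End FiniteSums.

Section GalignDistance.
Variables (R : realType) (m n : nat) (Omega Pset : pred 'M[R]_m).
Variable s : 'M[R]_m -> 'M[R]_m -> 'M[R]_m -> R.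
Local Notation Mat := 'M[R]_m.

Hypothesis PsetV : forall P, Pset P -> Pset (invmx P).
Hypothesis Pset1 : Pset 1%:M.
Hypothesis PsetM : forall P P', Pset P -> Pset P' -> Pset (P *m P').
Hypothesis score_ge0 : forall A B P, Omega A -> Omega B -> Pset P -> 0 <= s A B P.
Hypothesis score_refl : forall A, Omega A -> s A A 1%:M = 0.
Hypothesis score_sym : forall A B P, Omega A -> Omega B -> Pset P ->
  s A B P = s B A (invmx P).
Hypothesis score_triangle : forall A B C P P',
  Omega A -> Omega B -> Omega C -> Pset P -> Pset P' ->
  s A C (P *m P') <= s A B P + s B C P'.

Lemma admissible_unitmx (P : 'I_n -> 'I_n -> Mat) i j :
  admissible Pset P -> P i j \in unitmx.
Proof. by case=> _ PM P1; have [] := @mulmx1_unit _ _ (P i j) (P j i); rewrite ?PM. Qed.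

Lemma admissible_invmx (P : 'I_n -> 'I_n -> Mat) i j :
  admissible Pset P -> invmx (P i j) = P j i.
Proof.
move=> Padm; have [_ PM P1] := Padm.
by rewrite -[LHS]mulmx1 -(P1 i) -(PM i i j) mulmxA mulVmx ?mul1mx ?admissible_unitmx.
Qed.

Lemma admissible_reindex (P : 'I_n -> 'I_n -> Mat) (h : 'I_n -> 'I_n) :
  admissible Pset P -> admissible Pset (fun i j => P (h i) (h j)).
Proof. by case. Qed.

Definition star_family (g : 'I_n -> Mat) (j k : 'I_n) : Mat := g j *m invmx (g k).

Lemma admissible_star (g : 'I_n -> Mat) :
  (forall j, Pset (g j)) -> (forall j, g j \in unitmx) ->
  admissible Pset (star_family g).
Proof.
move=> gP gU; split=> [j k|i j k|i]; rewrite /star_family.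
- by rewrite PsetM ?PsetV.
- by rewrite mulmxA mulmxKV.
- by rewrite mulmxV.
Qed.

Lemma galign_cost_ge0 (A : 'I_n -> Mat) P :
  (forall i, Omega (A i)) -> admissible Pset P -> 0 <= galign_cost s A P.
Proof.
move=> AO [PP _ _]; rewrite mulr_ge0 ?invr_ge0 ?ler0n //.
by apply: sumr_ge0 => i _; apply: sumr_ge0 => j _; apply: score_ge0.
Qed.

Lemma galign_cost_reindex (A A' : 'I_n -> Mat) P (h : 'I_n -> 'I_n) :
  injective h -> (forall i, A' i = A (h i)) ->
  galign_cost s A' (fun i j => P (h i) (h j)) = galign_cost s A P.
Proof.
move=> h_inj AA'; rewrite /galign_cost [in RHS](reindex_inj h_inj); congr (_ * _).
apply: eq_bigr => i _; rewrite [in RHS](reindex_inj h_inj).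
by apply: eq_bigr => j _; rewrite !AA'.
Qed.

Lemma galign_cost_star_le (A : 'I_n -> Mat) (B : Mat) (g : 'I_n -> Mat) :
  (forall i, Omega (A i)) -> Omega B ->
  (forall j, Pset (g j)) -> (forall j, g j \in unitmx) ->
  galign_cost s A (star_family g) <= (\sum_j s (A j) B (g j)) *+ n.-1.
Proof.
move=> AO BO gP gU; set a := fun j => s (A j) B (g j).
have diag j : s (A j) (A j) (star_family g j j) = 0 by rewrite /star_family mulmxV ?score_refl.
have offdiag j k : s (A j) (A k) (star_family g j k) <= a j + a k.
  rewrite /a /star_family (score_sym (AO k) BO (gP k)).
  by apply: score_triangle; rewrite ?PsetV.
apply: (@le_trans _ _ (2^-1 * \sum_j \sum_(k | k != j) (a j + a k))).
  rewrite ler_wpM2l ?invr_ge0 ?ler0n //; apply: ler_sum => j _.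
  by rewrite (bigD1 j) //= diag add0r; apply: ler_sum => k _.
by rewrite sum_offdiag_addr card_ord -[X in _ * X](mulr_natl _ 2) mulKf ?pnatr_eq0.
Qed.

(* By symmetry of s, row i and column i of the cost of Q both contain s(A_j, B, Q_ji). *)
Lemma galign_cost_replace_ge (A : 'I_n -> Mat) (B : Mat) i Q :
  (forall j, Omega (A j)) -> Omega B -> admissible Pset Q ->
  \sum_(j | j != i) s (A j) B (Q j i) <= galign_cost s (replace_at A i B) Q.
Proof.
move=> AO BO Qadm; have [QP _ _] := Qadm; set A' := replace_at A i B.
have A'O j : Omega (A' j) by rewrite /A' /replace_at; case: ifP.
have A'i : A' i = B by rewrite /A' /replace_at eqxx.
have A'j j : j != i -> A' j = A j by move=> /negbTE ji; rewrite /A' /replace_at ji.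
have cost_ge0 j k : 0 <= s (A' j) (A' k) (Q j k) by apply: score_ge0.
rewrite /galign_cost ler_pdivlMl ?ltr0n //; apply: le_trans (sum_row_col_le_sum i cost_ge0).
rewrite mulr_sumr; apply: ler_sum => j ji.
rewrite A'i A'j // (score_sym BO (AO j) (QP i j)) admissible_invmx //.
by rewrite mulr_natl mulr2n.
Qed.

Variable d : ('I_n -> Mat) -> R.
Hypothesis d_galign : is_galign_distance Omega Pset s d.

Lemma galign_distance_ge0 (A : 'I_n -> Mat) : (forall i, Omega (A i)) -> 0 <= d A.
Proof. by move=> AO; have [[P Padm ->] _] := d_galign AO; apply: galign_cost_ge0. Qed.

Lemma galign_distance_le_perm (A A' : 'I_n -> Mat) (sigma : 'S_n) :
  (forall i, Omega (A i)) -> (forall i, Omega (A' i)) ->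
  (forall i, A' i = A (sigma i)) -> d A <= d A'.
Proof.
move=> AO A'O AA'; have [[Q Qadm ->] _] := d_galign A'O.
rewrite -(galign_cost_reindex (A' := A) (h := (sigma^-1)%g) Q perm_inj); last first.
  by move=> i; rewrite AA' permKV.
by apply: (d_galign AO).2; apply: admissible_reindex.
Qed.

Lemma galign_distance_const (B : Mat) : Omega B -> d (fun=> B) = 0.
Proof.
move=> BO; apply/le_anti; rewrite galign_distance_ge0 // andbT.
have one_adm : admissible Pset (fun _ _ : 'I_n => 1%:M) by split=> // *; rewrite mul1mx.
apply: le_trans ((d_galign (fun=> BO)).2 _ one_adm) _.
by rewrite /galign_cost big1 ?mulr0 // => i _; rewrite big1 // => j _; apply: score_refl.
Qed.

Hypothesis n_gt1 : (1 < n)%N.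

Lemma galign_distance_polygon (A : 'I_n -> Mat) (B : Mat) :
  (forall i, Omega (A i)) -> Omega B ->
  d A <= \sum_i d (replace_at A i B).
Proof.
move=> AO BO.
have A'O i j : Omega (replace_at A i B j) by rewrite /replace_at; case: ifP.
have /fin_all_exists2[Q Qadm dQ] : forall i, exists2 Q, admissible Pset Q &
    d (replace_at A i B) = galign_cost s (replace_at A i B) Q.
  by move=> i; have [] := d_galign (A'O i).
pose c i j := s (A j) B (Q i j i).
have /fin_all_exists2[nb nb_neq nb_min] : forall j, exists2 i, i != j &
    c i j *+ n.-1 <= \sum_(i | i != j) c i j.
  move=> j; have := exists_mulrn_card_le_sum (P := predC1 j) (c^~ j).
  by rewrite cardC1 card_ord; apply; rewrite -ltnS prednK // ltnW.
pose g j := Q (nb j) j (nb j).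
have gP j : Pset (g j) by have [QP _ _] := Qadm (nb j); apply: QP.
have gU j : g j \in unitmx by apply: admissible_unitmx.
apply: le_trans ((d_galign AO).2 _ (admissible_star gP gU)) _.
apply: le_trans (galign_cost_star_le AO BO gP gU) _.
apply: (@le_trans _ _ (\sum_j \sum_(i | i != j) c i j)).
  by rewrite -sumrMnl; apply: ler_sum => j _; apply: nb_min.
rewrite (exchange_big_dep predT) //=; apply: ler_sum => i _.
under eq_bigl do rewrite eq_sym.
by rewrite dQ; apply: galign_cost_replace_ge.
Qed.

End GalignDistance.

Theorem theorem2 (R : realType) (m n : nat) (Omega Pset : pred 'M[R]_m)
  (s : 'M[R]_m -> 'M[R]_m -> 'M[R]_m -> R) (d : ('I_n -> 'M[R]_m) -> R) :
  P_score Omega Pset s -> (2 <= n)%N ->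
  is_galign_distance Omega Pset s d ->
  pseudo_n_metric Omega d.
Proof.
move=> [PsetUV [Pset1 [PsetM [score_ge0 [score_refl [score_sym score_triangle]]]]]].
move=> n_gt1 d_galign; have PsetV P : Pset P -> Pset (invmx P) by move=> /PsetUV[].
split.
- by move=> A AO; apply: (galign_distance_ge0 score_ge0 d_galign AO).
- move=> A sigma AO; have AsigmaO i : Omega (A (sigma i)) by [].
  apply/le_anti/andP; split.
  + by apply: (galign_distance_le_perm d_galign AO AsigmaO (sigma := sigma)).
  + apply: (galign_distance_le_perm d_galign AsigmaO AO (sigma := sigma^-1)%g) => i.
    by rewrite permKV.
- move=> A B AO BO; apply: (galign_distance_polygon PsetV PsetM score_ge0 score_refl
    score_sym score_triangle d_galign n_gt1 AO BO).
- by move=> B BO; apply: (galign_distance_const Pset1 score_ge0 score_refl d_galign BO).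
Qed.
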